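(* Let $m\ge 2$ and let $\mathcal{R}_m^4$ be the rose graph with $N_m=3m+1$ nodes. For the NBCRW on $\mathcal{R}_m^4$, the stationary probability of the hub node, of any internal node, and of any peripheral node are respectively $$\pi_{\mathrm H}^{\mathrm B}=\frac{m}{2(m+\sqrt{2m-1})}=\frac{N_m-1}{2(N_m-1)+2\sqrt{6N_m-15}},\qquad \pi_{\mathrm I}^{\mathrm B}=\frac{1}{4m}=\frac{3}{4(N_m-1)},$$ $$\pi_{\mathrm P}^{\mathrm B}=\frac{m\sqrt{2m-1}-2m+1}{2m(m-1)^2}=\frac{3(N_m-1)\sqrt{6N_m-15}-18N_m+45}{2(N_m-1)(N_m-4)^2}.$$
   Context: The rose graph $\mathcal{R}_m^4$ ($m\ge2$) is obtained by gluing $m$ cycles of length 4 at a single common node, the hub. It has $3m+1$ nodes and $4m$ edges. In each 4-cycle (petal), the two neighbours of the hub are internal nodes and the node opposite the hub is the peripheral node. The non-backtracking matrix $\mathbf{B}$ of a graph is the matrix indexed by directed edges $i\to j$ (each undirected edge gives two directed edges), with $B_{i\to j,\,k\to l}=1$ if $j=k$ and $i\neq l$, and $0$ otherwise; $v=(v_{i\to j})$ is a non-negative eigenvector for its leading (Perron–Frobenius) eigenvalue, and the non-backtracking centrality of node $i$ is $x_i=\sum_{j\in\mathcal{N}_i}v_{i\to j}$. The non-backtracking centrality based random walk (NBCRW) is the Markov chain on nodes with transition probabilities $p_{ij}=a_{ij}x_j/\sum_k a_{ik}x_k$, $(a_{ij})$ the adjacency matrix; its stationary distribution is the probability vector $\pi$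 with $\pi\mathbf{P}=\pi$. *)

From HB Require Import structures.
From mathcomp Require Import all_boot all_order all_algebra.
From mathcomp Require Import complex.
Set Implicit Arguments. Unset Strict Implicit. Unset Printing Implicit Defensive.
Import Order.TTheory GRing.Theory Num.Theory.
Local Open Scope ring_scope.

Section Graph.
Variables (V : finType) (adj : rel V).

Definition dedge := {p : V * V | adj p.1 p.2}.

Definition nb_entry (e f : dedge) : nat :=
  (((val e).2 == (val f).1) && ((val e).1 != (val f).2)) : nat.

Variable R : rcfType.

Definition nb_eigenvalue (mu : R[i]) : Prop :=
  exists w : dedge -> R[i], (exists e, w e != 0) /\
    forall e, \sum_f (nb_entry e f)%:R * w f = mu * w e.

Definition nb_perron_vector (lam : R) (v : dedge -> R) : Prop :=
  [/\ forall e, 0 <= v e,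
      exists e, v e != 0,
      forall e, \sum_f (nb_entry e f)%:R * v f = lam * v e
    & forall mu : R[i], nb_eigenvalue mu -> `|mu| <= lam%:C]%C.

Definition nb_centrality (v : dedge -> R) (i : V) : R :=
  \sum_(e : dedge | (val e).1 == i) v e.

Definition nbcrw (x : V -> R) (i j : V) : R :=
  (adj i j)%:R * x j / \sum_k (adj i k)%:R * x k.

Definition stationary (P : V -> V -> R) (pi : V -> R) : Prop :=
  [/\ forall i, 0 <= pi i, \sum_i pi i = 1
    & forall j, \sum_i pi i * P i j = pi j].

End Graph.

(* Rose graph R_m^4: nodes are the hub (None) and, for each petal k < m,
   Some (k, 0) and Some (k, 2) (internal nodes, adjacent to the hub) and
   Some (k, 1) (peripheral node, opposite to the hub). *)
Definition rose_node (m : nat) := option ('I_m * 'I_3).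

Definition rose_adj (m : nat) : rel (rose_node m) := fun a b =>
  match a, b with
  | None, Some (_, t) => t != 1%N :> nat
  | Some (_, t), None => t != 1%N :> nat
  | Some (k, t), Some (k', t') =>
      (k == k') && ((((t == 1%N :> nat) && (t' != 1%N :> nat)))
                    || ((t != 1%N :> nat) && (t' == 1%N :> nat)))
  | None, None => false
  end.

Definition rose_hub (m : nat) : rose_node m := None.
Definition is_internal (m : nat) (a : rose_node m) : bool :=
  if a is Some (_, t) then t != 1%N :> nat else false.
Definition is_peripheral (m : nat) (a : rose_node m) : bool :=
  if a is Some (_, t) then t == 1%N :> nat else false.

From HB Require Import structures.
From mathcomp Require Import all_boot all_order all_algebra.
From mathcomp Require Import complex.
From mathcomp Require Import ring lra.
Set Implicit Arguments. Unset Strict Implicit. Unset Printing Implicit Defensive.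
Import Order.TTheory GRing.Theory Num.Theory.
Local Open Scope ring_scope.

(* Writing [w a b] for the eigenvector entry on the edge a -> b and [x] for the
   centrality, the eigen-equation reads [lam * w a b = x b - w b a].  On a rose,
   following a petal from the hub through its internal node u, the peripheral
   node and the other internal node u' multiplies the weight of the hub edge by
   [lam] at each step, and closing the cycle gives
   [lam^4 w h u + w h u' = x h].  Summing over the 2m hub edges yields
   [lam^4 = 2m - 1], and then all hub edges carry the
   same weight c.  The centralities are [2mc], [(lam + lam^3) c] and [2 lam^2 c].
   The balance equations of the walk at the three nodes of a petal, together
   with normalisation, then solve to [pi_H = x_H / (2 (x_H + x_P))],
   [pi_I = 1 / (4m)] and [pi_P = x_P / (2m (x_H + x_P))]. *)

Lemma sum_delta (I : finType) (R : pzRingType) (i : I) (G : I -> R) :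
  \sum_j (i == j)%:R * G j = G i.
Proof.
rewrite (bigD1 i) //= eqxx mul1r big1 ?addr0 // => j /negbTE ji.
by rewrite eq_sym ji mul0r.
Qed.

Section NonBacktracking.
Variables (V : finType) (adj : rel V) (R : rcfType) (v : dedge adj -> R).

Definition edge_weight (a b : V) : R :=
  if insub (a, b) : option (dedge adj) is Some e then v e else 0.

Lemma edge_weightE (e : dedge adj) : v e = edge_weight (val e).1 (val e).2.
Proof. by rewrite /edge_weight -surjective_pairing valK. Qed.

Lemma mul_adj_edge_weight a b : (adj a b)%:R * edge_weight a b = edge_weight a b.
Proof.
by case ab: (adj a b); rewrite ?mul1r // mul0r /edge_weight insubF.
Qed.

Lemma edge_weight_ge0 : (forall e, 0 <= v e) -> forall a b, 0 <= edge_weight a b.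
Proof. by move=> v_ge0 a b; rewrite /edge_weight; case: insub. Qed.

Lemma sum_dedge (F : V -> V -> R) :
  \sum_(e : dedge adj) F (val e).1 (val e).2 = \sum_a \sum_b (adj a b)%:R * F a b.
Proof.
rewrite pair_bigA /= [RHS](bigID (fun p : V * V => adj p.1 p.2)) /=.
rewrite [X in _ + X]big1 ?addr0 => [|p /negbTE ->]; last by rewrite mul0r.
rewrite (reindex_omap (val : dedge adj -> V * V) insub) => [|p adj_p]; last first.
  by rewrite insubT.
apply: eq_big => [e|e _]; last by rewrite (valP e) mul1r.
by rewrite (valP e) valK eqxx.
Qed.

Lemma nb_centralityE a :
  nb_centrality v a = \sum_b (adj a b)%:R * edge_weight a b.
Proof.
rewrite /nb_centrality big_mkcond /=.
under eq_bigr => e _.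
  have -> : (if (val e).1 == a then v e else 0)
            = ((val e).1 == a)%:R * edge_weight (val e).1 (val e).2.
    by rewrite -edge_weightE; case: eqP; rewrite ?mul1r ?mul0r.
  over.
rewrite (sum_dedge (fun a' b => (a' == a)%:R * edge_weight a' b)).
rewrite (bigD1 a) //= [X in _ + X]big1 ?addr0 => [|a' /negbTE na]; last first.
  by apply: big1 => b _; rewrite na mul0r mulr0.
by apply: eq_bigr => b _; rewrite eqxx mul1r.
Qed.

(* Because [edge_weight] vanishes off the edges, the non-backtracking condition
   only removes the reverse edge b -> a from the centrality of b. *)
Lemma nb_eigen_edge lam :
  (forall e, \sum_f (nb_entry e f)%:R * v f = lam * v e) ->
  forall a b, adj a b -> lam * edge_weight a b = nb_centrality v b - edge_weight b a.
Proof.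
move=> eigen a b ab; have := eigen (exist _ (a, b) ab); rewrite edge_weightE /= => <-.
under eq_bigr => f _.
  rewrite edge_weightE [nb_entry _ _]/nb_entry /=.
  over.
rewrite (sum_dedge (fun x y => ((b == x) && (a != y))%:R * edge_weight x y)).
rewrite (bigD1 b) //= [X in _ + X]big1 ?addr0 => [|x /negbTE bx]; last first.
  by apply: big1 => y _; rewrite eq_sym bx mul0r mulr0.
rewrite nb_centralityE (bigD1 a) //= [in RHS](bigD1 a) //= !eqxx mul0r mulr0.
rewrite mul_adj_edge_weight add0r addrAC subrr add0r; apply: eq_bigr => c ac.
by rewrite eq_sym ac mul1r.
Qed.

Lemma edge_weight_le_centrality : (forall e, 0 <= v e) ->
  forall a b, edge_weight a b <= nb_centrality v a.
Proof.
move=> v_ge0 a b; rewrite nb_centralityE (bigD1 b) //= mul_adj_edge_weight lerDl.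
by apply: sumr_ge0 => c _; rewrite mulr_ge0 ?ler0n ?edge_weight_ge0.
Qed.

End NonBacktracking.

Section Rose.
Variable m : nat.
Implicit Types (k : 'I_m) (b : bool).

Definition rose_int k b : rose_node m := Some (k, if b then ord_max else ord0).
Definition rose_per k : rose_node m := Some (k, @Ordinal 3 1 isT).

Definition rose_profile (T : Type) (h i p : T) (a : rose_node m) : T :=
  if a is Some (_, t) then (if val t == 1%N then p else i) else h.

Variant rose_node_spec : rose_node m -> Type :=
  | RoseHub : rose_node_spec (rose_hub m)
  | RoseInt k b : rose_node_spec (rose_int k b)
  | RosePer k : rose_node_spec (rose_per k).

Lemma rose_nodeP a : rose_node_spec a.
Proof.
case: a => [[k [[|[|[|t]]] ht]]|] //; last exact: RoseHub.
- by rewrite (_ : Ordinal ht = ord0); [exact: (RoseInt k false) | exact: val_inj].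
- by rewrite (_ : Ordinal ht = @Ordinal 3 1 isT); [exact: RosePer | exact: val_inj].
- by rewrite (_ : Ordinal ht = ord_max); [exact: (RoseInt k true) | exact: val_inj].
Qed.

Section Profile.
Variables (T : Type) (h i p : T).

Lemma rose_profile_hub : rose_profile h i p (rose_hub m) = h.
Proof. by []. Qed.

Lemma rose_profile_int k b : rose_profile h i p (rose_int k b) = i.
Proof. by case: b. Qed.

Lemma rose_profile_per k : rose_profile h i p (rose_per k) = p.
Proof. by []. Qed.

End Profile.

Lemma rose_adj_sym : symmetric (@rose_adj m).
Proof.
move=> [[k t]|] [[k' t']|] //=; rewrite eq_sym.
by case: (k' == k) => //=; case: (_ == 1%N); case: (_ == 1%N).
Qed.

Lemma rose_adj_hub_int k b : rose_adj (rose_hub m) (rose_int k b).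
Proof. by case: b. Qed.

Lemma rose_adj_int_hub k b : rose_adj (rose_int k b) (rose_hub m).
Proof. by case: b. Qed.

Lemma rose_adj_int_per k b : rose_adj (rose_int k b) (rose_per k).
Proof. by case: b; rewrite /= eqxx. Qed.

Lemma rose_adj_per_int k b : rose_adj (rose_per k) (rose_int k b).
Proof. by case: b; rewrite /= eqxx. Qed.

Variable R : rcfType.
Implicit Type F : rose_node m -> R.

Lemma sum_rose_node F :
  \sum_a F a = F (rose_hub m)
               + \sum_k (F (rose_int k false) + F (rose_per k) + F (rose_int k true)).
Proof.
rewrite (bigD1 None) //=; congr (_ + _).
rewrite (reindex_omap Some idfun) => [|[a|] //].
rewrite (eq_bigl xpredT) => [|a]; last by rewrite eqxx.
rewrite (eq_bigr (fun p => F (Some (p.1, p.2)))) => [|[] //].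
rewrite -(pair_bigA _ (fun k t => F (Some (k, t)))) /=.
apply: eq_bigr => k _; rewrite !big_ord_recl big_ord0 addr0 addrA.
by congr (F (Some (k, _)) + F (Some (k, _)) + F (Some (k, _))); apply: val_inj.
Qed.

Lemma rose_int_sum k b F :
  \sum_a (rose_adj (rose_int k b) a)%:R * F a = F (rose_hub m) + F (rose_per k).
Proof.
rewrite sum_rose_node; case: b => /=; rewrite mul1r; congr (_ + _);
  rewrite -[RHS](sum_delta k (fun k' => F (rose_per k')));
  by apply: eq_bigr => k' _; rewrite !andbF !andbT !mul0r add0r addr0.
Qed.

Lemma rose_per_sum k F :
  \sum_a (rose_adj (rose_per k) a)%:R * F a = F (rose_int k false) + F (rose_int k true).
Proof.
rewrite sum_rose_node /= mul0r add0r.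
rewrite -(sum_delta k (fun k' => F (rose_int k' false))).
rewrite -(sum_delta k (fun k' => F (rose_int k' true))) -big_split /=.
by apply: eq_bigr => k' _; rewrite !andbF !andbT mul0r addr0.
Qed.

Lemma rose_hub_sum F :
  \sum_a (rose_adj (rose_hub m) a)%:R * F a
  = \sum_k (F (rose_int k false) + F (rose_int k true)).
Proof.
rewrite sum_rose_node /= mul0r add0r; apply: eq_bigr => k _.
by rewrite !mul1r mul0r addr0.
Qed.

End Rose.

Section RoseWalk.
Variables (m : nat) (R : rcfType) (lam : R) (v : dedge (@rose_adj m) -> R).
Hypothesis eigen : forall e, \sum_f (nb_entry e f)%:R * v f = lam * v e.
Local Notation w := (edge_weight v).
Local Notation x := (nb_centrality v).
Local Notation hub := (rose_hub m).
Local Notation hw k b := (edge_weight v (rose_hub m) (rose_int k b)).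

Lemma rose_centrality_hub : x hub = \sum_k (hw k false + hw k true).
Proof. by rewrite nb_centralityE rose_hub_sum. Qed.

Lemma rose_centrality_int k b :
  x (rose_int k b) = w (rose_int k b) hub + w (rose_int k b) (rose_per k).
Proof. by rewrite nb_centralityE rose_int_sum. Qed.

Lemma rose_centrality_per k :
  x (rose_per k) = w (rose_per k) (rose_int k false) + w (rose_per k) (rose_int k true).
Proof. by rewrite nb_centralityE rose_per_sum. Qed.

Lemma rose_petal_walk k b :
  [/\ w (rose_int k b) (rose_per k) = lam * hw k b,
      w (rose_per k) (rose_int k (~~ b)) = lam ^+ 2 * hw k b,
      w (rose_int k (~~ b)) hub = lam ^+ 3 * hw k b &
      lam ^+ 4 * hw k b + hw k (~~ b) = x hub].
Proof.
have step := nb_eigen_edge eigen.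
have e1 : w (rose_int k b) (rose_per k) = lam * hw k b.
  by rewrite step ?rose_adj_hub_int // rose_centrality_int addrC addKr.
have e2 : w (rose_per k) (rose_int k (~~ b)) = lam ^+ 2 * hw k b.
  rewrite expr2 -mulrA -e1 step ?rose_adj_int_per // rose_centrality_per.
  by case: b {e1}; rewrite /= ?addrK // addrC addKr.
have e3 : w (rose_int k (~~ b)) hub = lam ^+ 3 * hw k b.
  by rewrite exprS -mulrA -e2 step ?rose_adj_per_int // rose_centrality_int addrK.
split=> //.
by rewrite exprS -mulrA -e3 step ?rose_adj_int_hub // subrK.
Qed.

Lemma rose_centrality_int_walk k b :
  x (rose_int k b) = lam * hw k b + lam ^+ 3 * hw k (~~ b).
Proof.
have [e1 _ _ _] := rose_petal_walk k b; have [_ _ e3 _] := rose_petal_walk k (~~ b).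
by rewrite negbK in e3; rewrite rose_centrality_int e1 e3 addrC.
Qed.

Lemma rose_centrality_per_walk k : x (rose_per k) = lam ^+ 2 * (hw k false + hw k true).
Proof.
have [_ e0 _ _] := rose_petal_walk k true; have [_ e1 _ _] := rose_petal_walk k false.
by rewrite rose_centrality_per e0 e1 mulrDr addrC.
Qed.

Lemma rose_centrality_hub_neq0 :
  (forall e, 0 <= v e) -> (exists e, v e != 0) -> x hub != 0.
Proof.
move=> v_ge0 [e ve_neq0]; apply: contra ve_neq0 => /eqP x_hub0.
have w_ge0 := edge_weight_ge0 v_ge0.
have hw0 k b : hw k b = 0.
  by apply/eqP; rewrite eq_le w_ge0 andbT -x_hub0 edge_weight_le_centrality.
have x0 a : x a = 0.
  case: a / rose_nodeP => [|k b|k] //.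
    by rewrite rose_centrality_int_walk !hw0 !mulr0 addr0.
  by rewrite rose_centrality_per_walk !hw0 addr0 mulr0.
by rewrite eq_le v_ge0 andbT edge_weightE -(x0 (val e).1) edge_weight_le_centrality.
Qed.

Lemma rose_eigen_quartic : x hub != 0 -> lam ^+ 4 = 2 * m%:R - 1.
Proof.
move=> x_hub_neq0.
have petal k : (lam ^+ 4 + 1) * (hw k false + hw k true) = 2 * x hub.
  have [_ _ _ r0] := rose_petal_walk k false; have [_ _ _ r1] := rose_petal_walk k true.
  transitivity ((lam ^+ 4 * hw k false + hw k true) + (lam ^+ 4 * hw k true + hw k false)).
    by ring.
  by rewrite r0 r1 mulr_natl mulr2n.
have : (lam ^+ 4 + 1) * x hub = 2 * m%:R * x hub.
  rewrite {1}rose_centrality_hub mulr_sumr (eq_bigr _ (fun k _ => petal k)).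
  by rewrite sumr_const card_ord -mulr_natr; ring.
by move/(mulIf x_hub_neq0) <-; rewrite addrK.
Qed.

Lemma rose_hub_weight_const : (1 < m)%N -> lam ^+ 4 = 2 * m%:R - 1 ->
  forall k b, hw k b = x hub / (2 * m%:R).
Proof.
move=> m_gt1 quartic k b.
have M_gt1 : 1 < m%:R :> R by rewrite ltr1n.
have [_ _ _ r] := rose_petal_walk k b; have [_ _ _ r'] := rose_petal_walk k (~~ b).
rewrite negbK in r'.
have sym : hw k (~~ b) = hw k b.
  apply/eqP; rewrite -subr_eq0; apply/eqP; apply: (@mulfI _ (lam ^+ 4 - 1)).
    by rewrite quartic; apply: lt0r_neq0; lra.
  transitivity ((lam ^+ 4 * hw k (~~ b) + hw k b) - (lam ^+ 4 * hw k b + hw k (~~ b))).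
    by ring.
  by rewrite r r' subrr mulr0.
rewrite -r sym quartic; field.
by apply: lt0r_neq0; lra.
Qed.

Lemma rose_nb_centrality : (1 < m)%N -> (forall e, 0 <= v e) -> (exists e, v e != 0) ->
  exists2 c : R, 0 < c &
    [/\ 0 < lam, lam ^+ 4 = 2 * m%:R - 1
      & forall a, x a = rose_profile (2 * m%:R * c) ((lam + lam ^+ 3) * c) (2 * lam ^+ 2 * c) a].
Proof.
move=> m_gt1 v_ge0 v_neq0.
have w_ge0 := edge_weight_ge0 v_ge0.
have M_gt1 : 1 < m%:R :> R by rewrite ltr1n.
have x_hub_neq0 := rose_centrality_hub_neq0 v_ge0 v_neq0.
have quartic := rose_eigen_quartic x_hub_neq0.
have hw_c := rose_hub_weight_const m_gt1 quartic.
set c := x hub / (2 * m%:R) in hw_c *.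
have c_gt0 : 0 < c.
  have x_hub_ge0 : 0 <= x hub.
    by rewrite rose_centrality_hub sumr_ge0 // => k _; rewrite addr_ge0.
  by rewrite divr_gt0 ?lt_def ?x_hub_neq0 //; lra.
have lam_gt0 : 0 < lam.
  pose k : 'I_m := Ordinal (ltnW m_gt1).
  have [walk _ _ _] := rose_petal_walk k false.
  have := w_ge0 (rose_int k false) (rose_per k).
  rewrite walk hw_c pmulr_lge0 // le_eqVlt => /orP[/eqP lam0|//].
  by move: quartic; rewrite -lam0 expr0n /=; lra.
exists c => //; split=> // a.
case: a / rose_nodeP => [|k b|k].
- by rewrite rose_profile_hub /c; field; apply: lt0r_neq0; lra.
- by rewrite rose_profile_int rose_centrality_int_walk !hw_c; ring.
- by rewrite rose_profile_per rose_centrality_per_walk !hw_c; ring.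
Qed.

End RoseWalk.

Section RoseStationary.
Variables (m : nat) (R : rcfType) (xH xI xP : R) (x pi : rose_node m -> R).
Hypotheses (m_gt0 : (0 < m)%N) (xH_gt0 : 0 < xH) (xI_gt0 : 0 < xI) (xP_gt0 : 0 < xP).
Hypothesis x_profile : forall a, x a = rose_profile xH xI xP a.
Hypothesis pi_stationary : stationary (nbcrw (@rose_adj m) x) pi.
Local Notation hub := (rose_hub m).
Local Notation M := (m%:R : R).
Local Notation D a := (\sum_c (rose_adj a c)%:R * x c).

Let M_neq0 : M != 0. Proof. by rewrite pnatr_eq0 -lt0n. Qed.
Let xH_neq0 : xH != 0. Proof. exact: lt0r_neq0. Qed.
Let xI_neq0 : xI != 0. Proof. exact: lt0r_neq0. Qed.
Let xHP_neq0 : xH + xP != 0. Proof. by rewrite lt0r_neq0 ?addr_gt0. Qed.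
Let nonzero := (M_neq0, xH_neq0, xI_neq0, xHP_neq0).

Lemma rose_stationary_balance j : pi j = \sum_i (rose_adj j i)%:R * (pi i * x j / D i).
Proof.
have [_ _ balance] := pi_stationary; rewrite -balance; apply: eq_bigr => i _.
by rewrite /nbcrw rose_adj_sym; ring.
Qed.

Lemma rose_denom_hub : D hub = 2 * M * xI.
Proof.
under eq_bigr => c _ do rewrite x_profile.
rewrite rose_hub_sum (eq_bigr (fun=> xI + xI)) => [|k _]; last by rewrite !rose_profile_int.
by rewrite sumr_const card_ord -mulr_natr; ring.
Qed.

Lemma rose_denom_int k b : D (rose_int k b) = xH + xP.
Proof. by rewrite rose_int_sum !x_profile. Qed.

Lemma rose_denom_per k : D (rose_per k) = 2 * xI.
Proof. by rewrite rose_per_sum !x_profile !rose_profile_int; ring. Qed.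

Lemma rose_balance_int k b : pi (rose_int k b) = pi hub / (2 * M) + pi (rose_per k) / 2.
Proof.
rewrite {1}rose_stationary_balance rose_int_sum rose_denom_hub rose_denom_per x_profile.
by rewrite rose_profile_int; field; rewrite ?nonzero.
Qed.

Lemma rose_balance_per k :
  pi (rose_per k) = xP / (xH + xP) * (pi (rose_int k false) + pi (rose_int k true)).
Proof.
rewrite {1}rose_stationary_balance rose_per_sum !rose_denom_int x_profile rose_profile_per.
by field; rewrite ?nonzero.
Qed.

Lemma rose_stationary_petal k b :
  pi (rose_int k b) = pi hub * (xH + xP) / (2 * M * xH)
  /\ pi (rose_per k) = pi hub * xP / (M * xH).
Proof.
have int_eq b' : pi (rose_int k b') = pi (rose_int k false).
  by rewrite !rose_balance_int.
have per_eq : pi (rose_per k) = 2 * xP / (xH + xP) * pi (rose_int k false).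
  by rewrite rose_balance_per (int_eq true); field.
have int_scaled : pi (rose_int k false) * (xH / (xH + xP)) = pi hub / (2 * M).
  have -> : xH / (xH + xP) = 1 - xP / (xH + xP) by field.
  by rewrite mulrBr mulr1 {1}rose_balance_int per_eq; field; rewrite ?nonzero.
have int_false : pi (rose_int k false) = pi hub * (xH + xP) / (2 * M * xH).
  apply: (@mulIf _ (xH / (xH + xP))); first by rewrite mulf_neq0 ?invr_eq0 ?nonzero.
  by rewrite int_scaled; field; rewrite ?nonzero.
by rewrite int_eq per_eq int_false; split; field; rewrite ?nonzero.
Qed.

Lemma rose_stationary_hub : pi hub = xH / (2 * (xH + xP)).
Proof.
have [_ total _] := pi_stationary.
have norm : pi hub * (2 * (xH + xP) / xH) = 1.
  rewrite -[RHS]total sum_rose_node (eq_bigr (fun=> pi hub * ((xH + 2 * xP) / (M * xH)))).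
    by rewrite sumr_const card_ord -mulr_natr; field; rewrite ?nonzero.
  move=> k _; have [-> ->] := rose_stationary_petal k false.
  by have [-> _] := rose_stationary_petal k true; field; rewrite ?nonzero.
apply: (@mulIf _ (2 * (xH + xP) / xH)); first by rewrite !mulf_neq0 ?invr_eq0 ?nonzero ?pnatr_eq0.
by rewrite norm; field; rewrite ?nonzero.
Qed.

Lemma rose_stationary a :
  pi a = rose_profile (xH / (2 * (xH + xP))) (1 / (4 * M)) (xP / (2 * M * (xH + xP))) a.
Proof.
case: a / rose_nodeP => [|k b|k].
- by rewrite rose_stationary_hub.
- rewrite rose_profile_int; have [-> _] := rose_stationary_petal k b.
  by rewrite rose_stationary_hub; field; rewrite ?nonzero.
- rewrite rose_profile_per; have [_ ->] := rose_stationary_petal k false.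
  by rewrite rose_stationary_hub; field; rewrite ?nonzero.
Qed.

End RoseStationary.

Lemma rose_nbcrw_stationary (R : rcfType) (m : nat) (lam : R)
    (v : dedge (@rose_adj m) -> R) (pi : rose_node m -> R) :
  (1 < m)%N -> nb_perron_vector lam v ->
  stationary (nbcrw (@rose_adj m) (nb_centrality v)) pi ->
  let s := Num.sqrt (2 * m%:R - 1) in
  forall a, pi a = rose_profile (m%:R / (2 * (m%:R + s))) (1 / (4 * m%:R))
                                (s / (2 * m%:R * (m%:R + s))) a.
Proof.
move=> m_gt1 [v_ge0 v_neq0 eigen _] pi_stat s a.
have [c c_gt0 [lam_gt0 quartic x_profile]] := rose_nb_centrality eigen m_gt1 v_ge0 v_neq0.
have M_gt1 : 1 < m%:R :> R by rewrite ltr1n.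
have lam2_gt0 : 0 < lam ^+ 2 by rewrite exprn_gt0.
have s_lam : s = lam ^+ 2 by rewrite /s -quartic (exprM lam 2 2) sqrtr_sqr gtr0_norm.
have [xH_gt0 xI_gt0 xP_gt0] :
    [/\ 0 < 2 * m%:R * c, 0 < (lam + lam ^+ 3) * c & 0 < 2 * lam ^+ 2 * c].
  by split; rewrite !mulr_gt0 ?addr_gt0 ?exprn_gt0 //; lra.
rewrite (rose_stationary (ltnW m_gt1) xH_gt0 xI_gt0 xP_gt0 x_profile pi_stat) s_lam.
by congr (rose_profile _ _ _ a); field; rewrite ?lt0r_neq0 ?addr_gt0 //; lra.
Qed.

Lemma peripheral_closed_form (R : rcfType) (M s : R) :
  1 < M -> 0 <= s -> s ^+ 2 = 2 * M - 1 ->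
  s / (2 * M * (M + s)) = (M * s - 2 * M + 1) / (2 * M * (M - 1) ^+ 2).
Proof.
move=> M_gt1 s_ge0 s2.
have factor : (M - 1) ^+ 2 = (M - s) * (M + s).
  apply/eqP; rewrite -subr_eq0; apply/eqP.
  by transitivity (s ^+ 2 - (2 * M - 1)); [ring | rewrite s2 subrr].
have Ms_neq0 : M - s != 0.
  apply: contraTneq M_gt1 => Ms0; move: factor; rewrite Ms0 mul0r => /eqP.
  by rewrite sqrf_eq0 subr_eq0 => /eqP ->; rewrite ltxx.
have -> : M * s - 2 * M + 1 = s * (M - s) by rewrite mulrBr -expr2 s2; ring.
by rewrite factor; field; rewrite Ms_neq0 !lt0r_neq0 //; lra.
Qed.

Theorem theorem4 (R : rcfType) (m : nat) (hm : (2 <= m)%N)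
  (lam : R) (v : dedge (@rose_adj m) -> R) (pi : rose_node m -> R) :
  nb_perron_vector lam v ->
  stationary (nbcrw (@rose_adj m) (nb_centrality v)) pi ->
  let M : R := m%:R in
  let N : R := (3 * m + 1)%N%:R in
  [/\ pi (rose_hub m) = M / (2 * (M + Num.sqrt (2 * M - 1)))
        /\ M / (2 * (M + Num.sqrt (2 * M - 1)))
           = (N - 1) / (2 * (N - 1) + 2 * Num.sqrt (6 * N - 15)),
      forall a, is_internal a ->
        pi a = 1 / (4 * M) /\ 1 / (4 * M) = 3 / (4 * (N - 1))
    & forall a, is_peripheral a ->
        pi a = (M * Num.sqrt (2 * M - 1) - 2 * M + 1) / (2 * M * (M - 1) ^+ 2)
        /\ (M * Num.sqrt (2 * M - 1) - 2 * M + 1) / (2 * M * (M - 1) ^+ 2)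
           = (3 * (N - 1) * Num.sqrt (6 * N - 15) - 18 * N + 45)
             / (2 * (N - 1) * (N - 4) ^+ 2)].
Proof.
move=> perron pi_stat M N; rewrite {}/N {}/M.
have pi_profile := rose_nbcrw_stationary hm perron pi_stat.
set s := Num.sqrt _ in pi_profile *.
have M_gt1 : 1 < m%:R :> R by rewrite ltr1n.
have s_sq : s ^+ 2 = 2 * m%:R - 1 by rewrite sqr_sqrtr //; lra.
have s_gt0 : 0 < s by rewrite sqrtr_gt0; lra.
have -> : Num.sqrt (6 * (3 * m + 1)%:R - 15) = 3 * s.
  rewrite -[3 * s]gtr0_norm ?mulr_gt0 // -sqrtr_sqr exprMn s_sq natrD natrM.
  by congr Num.sqrt; ring.
rewrite natrD natrM; split.
- by rewrite pi_profile; split=> //; field; rewrite ?lt0r_neq0 //; lra.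
- move=> a; case: a / rose_nodeP => [//|k b _|k //=].
  by rewrite pi_profile rose_profile_int; split=> //; field; rewrite ?lt0r_neq0 //; lra.
- move=> a; case: a / rose_nodeP => [//|k []|k _] //.
  rewrite pi_profile rose_profile_per (peripheral_closed_form M_gt1 (ltW s_gt0) s_sq).
  by split=> //; field; rewrite ?lt0r_neq0 //; lra.
Qed.
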